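(* Let $\alpha:I\to(0,\infty)$ and $a:I\to\mathbb{R}$ be smooth, and let $v$ be a smooth solution, with values in $I$, of $$v_t+a(v)v_x+\partial_x\big(\alpha(v)\partial_x(\alpha(v)\partial_x v)\big)=0.$$ For every integer $k\geq1$, $v_k:=(\alpha(v)\partial_x)^k v$ satisfies $$\partial_t v_k+a(v)\partial_x v_k+\partial_x\big(\alpha(v)\partial_x(\alpha(v)\partial_x v_k)\big)=f_k\,\partial_x^2 v_k+g_k\,\partial_x v_k+h_k,$$ where: (i) $f_k=(k-1)\alpha'(v)\,v_1=(k-1)\alpha(v)\partial_x(\alpha(v))$; (ii) $g_k=A_k(v)\,v_1^2+B_k(v)\,v_2$ for some continuous functions $A_k,B_k$ on $I$ (built from $\alpha$ and its derivatives), i.e. $g_k$ is of homogeneous weight $2$ in $(v_1,v_2)$; (iii) $h_k$ is a finite sum of terms of the form $\beta(v)\prod_{j=1}^{N}\partial_x^{\gamma_j}v$ with $1\le\gamma_j\le k$ for all $j$, where each $\beta$ is a continuous function on $I$ built from $\alpha$, $a$ and their derivatives, and where the weight $\sum_j\gamma_j$ of each term equals either $k+1$ or $k+3$. (For instance $f_1=g_1=0$, $h_1=-\frac{a'(v)}{\alpha(v)}v_1^2$.)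
   Context: Notation: $\alpha'$ denotes the derivative of the function $\alpha$ with respect to its argument, and $\alpha(v)$, $a(v)$ denote compositions with $v(t,x)$. The weight of a monomial $\beta(v)\prod_j\partial_x^{\gamma_j}v$ is the total number of derivatives $\sum_j\gamma_j$; in terms of the $v_j$, $v_j$ has weight $j$. *)

From Stdlib Require Import Reals List ClassicalEpsilon.
Open Scope R_scope.

(** The derivative of a real function, as a total operator (the genuine
    derivative wherever it exists; an arbitrary value otherwise). *)
Definition derivR (f : R -> R) (y : R) : R :=
  epsilon (inhabits 0) (fun l => derivable_pt_lim f y l).

Definition pDt (w : R -> R -> R) (t x : R) : R := derivR (fun s => w s x) t.
Definition pDx (w : R -> R -> R) (t x : R) : R := derivR (fun y => w t y) x.

Definition pDxn (n : nat) (w : R -> R -> R) : R -> R -> R := Nat.iter n pDx w.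

Definition is_open_interval (I : R -> Prop) : Prop :=
  (forall x y z, I x -> I z -> x <= y <= z -> I y) /\
  (forall x, I x -> exists e, 0 < e /\ forall y, Rabs (y - x) < e -> I y).

Definition open2 (U : R -> R -> Prop) : Prop :=
  forall t x, U t x -> exists e, 0 < e /\
    forall s y, Rabs (s - t) < e -> Rabs (y - x) < e -> U s y.

Definition smooth_on (I : R -> Prop) (f : R -> R) : Prop :=
  exists S : (R -> R) -> Prop, S f /\
    forall g, S g ->
      (exists g', S g' /\ forall y, I y -> derivable_pt_lim g y (g' y)) /\
      (forall y, I y -> continuity_pt g y).

Definition continuous2_at (g : R -> R -> R) (t x : R) : Prop :=
  forall eps, 0 < eps -> exists d, 0 < d /\
    forall s y, Rabs (s - t) < d -> Rabs (y - x) < d ->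
      Rabs (g s y - g t x) < eps.

(** w is C^infinity on the open set U of R^2: it belongs to a family of
    functions, all jointly continuous on U, closed under both partial
    derivatives (which exist everywhere on U). *)
Definition smooth2_on (U : R -> R -> Prop) (w : R -> R -> R) : Prop :=
  exists S : (R -> R -> R) -> Prop, S w /\
    forall g, S g ->
      (exists gt, S gt /\ forall t x, U t x ->
          derivable_pt_lim (fun s => g s x) t (gt t x)) /\
      (exists gx, S gx /\ forall t x, U t x ->
          derivable_pt_lim (fun y => g t y) x (gx t x)) /\
      (forall t x, U t x -> continuous2_at g t x).

Definition Lop (alpha : R -> R) (v w : R -> R -> R) : R -> R -> R :=
  fun t x => alpha (v t x) * pDx w t x.

Definition vk (alpha : R -> R) (v : R -> R -> R) (k : nat) : R -> R -> R :=
  Nat.iter k (Lop alpha v) v.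

Definition Pop (alpha a : R -> R) (v w : R -> R -> R) (t x : R) : R :=
  pDt w t x + a (v t x) * pDx w t x
  + pDx (Lop alpha v (Lop alpha v w)) t x.

(** A monomial term  beta(v) * prod_j d_x^{gamma_j} v, encoded as
    (beta, [gamma_1; ...; gamma_N]). *)
Definition prod_derivs (gs : list nat) (v : R -> R -> R) (t x : R) : R :=
  fold_right (fun g acc => pDxn g v t x * acc) 1 gs.

Definition eval_terms (terms : list ((R -> R) * list nat))
    (v : R -> R -> R) (t x : R) : R :=
  fold_right (fun bg acc => fst bg (v t x) * prod_derivs (snd bg) v t x + acc)
    0 terms.

Definition weight (gs : list nat) : nat := fold_right Nat.add 0%nat gs.

(* With L := alpha(v) d_x and P[w] := w_t + a(v) w_x + d_x (L (L w)), we have v_k = L^k v.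
   Eliminating v_t with P[v] = 0 gives, for every smooth w, the commutator formula
     P[L w] = alpha(v) d_x P[w] - (a'(v)/alpha(v)) v_1 L w + phi(v) (v_1 L^3 w - v_3 L w),
   where phi = alpha'/alpha^2.  Applied to w = v_k, it propagates by induction the form
     P[v_k] = (k-1) phi(v) v_1 v_(k+2) + G_k v_(k+1) + H_k,
   with G_k = C(k-1,2) phi'(v) v_1^2 + (C(k-1,2) - [k >= 2]) phi(v) v_2 and H_k a polynomial in
   the v_j whose monomials are tracked symbolically: L raises the weight of a monomial by one,
   which keeps the weights of H_k in {k+1, k+3}.  Expanding v_(k+2) = alpha^2 d_x^2 v_k +
   alpha alpha' v_x d_x v_k and v_(k+1) = alpha d_x v_k then gives f_k, g_k and h_k. *)

From Stdlib Require Import Reals List ClassicalEpsilon Lra Lia.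
From Coquelicot Require Import Derive Continuity Derive_2d.
Open Scope R_scope.

Lemma derivR_eq f y l : derivable_pt_lim f y l -> derivR f y = l.
Proof.
  intro H. unfold derivR.
  apply (uniqueness_limite f y); [|exact H].
  exact (epsilon_spec (inhabits 0) (fun l => derivable_pt_lim f y l) (ex_intro _ l H)).
Qed.

Lemma dpl_loc f g x l d : 0 < d -> (forall y, Rabs (y - x) < d -> f y = g y) ->
  derivable_pt_lim f x l -> derivable_pt_lim g x l.
Proof.
  intros Hd Hfg H.
  apply (derivable_pt_lim_locally_ext f g x (x - d) (x + d) l); [lra| |exact H].
  intros z Hz. apply Hfg. apply Rabs_def1; lra.
Qed.

Lemma dpl_eq f x l l' : derivable_pt_lim f x l -> l = l' -> derivable_pt_lim f x l'.
Proof. now intros H <-. Qed.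

Lemma dpl_const c x : derivable_pt_lim (fun _ => c) x 0.
Proof. apply derivable_pt_lim_const. Qed.

Lemma dpl_plus f g x l1 l2 : derivable_pt_lim f x l1 -> derivable_pt_lim g x l2 ->
  derivable_pt_lim (fun y => f y + g y) x (l1 + l2).
Proof. apply derivable_pt_lim_plus. Qed.

Lemma dpl_mult f g x l1 l2 : derivable_pt_lim f x l1 -> derivable_pt_lim g x l2 ->
  derivable_pt_lim (fun y => f y * g y) x (l1 * g x + f x * l2).
Proof. apply derivable_pt_lim_mult. Qed.

Lemma dpl_comp f g x l1 l2 : derivable_pt_lim f x l1 -> derivable_pt_lim g (f x) l2 ->
  derivable_pt_lim (fun y => g (f y)) x (l2 * l1).
Proof. apply derivable_pt_lim_comp. Qed.

Lemma dpl_inv f x l : derivable_pt_lim f x l -> f x <> 0 ->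
  derivable_pt_lim (fun y => / f y) x (- l / (f x)^2).
Proof.
  intros H Hn.
  apply derivable_pt_lim_ext with (fun y => 1 / f y); [intros; unfold Rdiv; ring|].
  apply dpl_eq with (1 := derivable_pt_lim_div _ _ x 0 l (dpl_const 1 x) H Hn).
  unfold Rsqr; field; exact Hn.
Qed.

(** * Polynomial expressions in abstract atoms *)

Definition mono_eval {A} (ev : A -> R) (m : list A) : R := fold_right (fun a r => ev a * r) 1 m.
Definition poly_eval {A} (ev : A -> R) (p : list (list A)) : R :=
  fold_right (fun m r => mono_eval ev m + r) 0 p.
Definition poly_over {A} (P : A -> Prop) (p : list (list A)) : Prop :=
  forall m, In m p -> forall a, In a m -> P a.

Lemma mono_eval_app {A} (ev : A -> R) m1 m2 :
  mono_eval ev (m1 ++ m2) = mono_eval ev m1 * mono_eval ev m2.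
Proof. induction m1; simpl; [ring| rewrite IHm1; ring]. Qed.

Lemma poly_eval_app {A} (ev : A -> R) p1 p2 :
  poly_eval ev (p1 ++ p2) = poly_eval ev p1 + poly_eval ev p2.
Proof. induction p1; simpl; [ring| rewrite IHp1; ring]. Qed.

Lemma poly_eval_map_cons {A} (ev : A -> R) a p :
  poly_eval ev (map (cons a) p) = ev a * poly_eval ev p.
Proof. induction p; simpl; [ring| rewrite IHp; unfold mono_eval; simpl; ring]. Qed.

Lemma poly_eval_map_appr {A} (ev : A -> R) m p :
  poly_eval ev (map (fun m' => m' ++ m) p) = poly_eval ev p * mono_eval ev m.
Proof. induction p; simpl; [ring| rewrite IHp, mono_eval_app; ring]. Qed.

Lemma poly_over_app {A} (P : A -> Prop) p1 p2 :
  poly_over P p1 -> poly_over P p2 -> poly_over P (p1 ++ p2).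
Proof. intros H1 H2 m Hm; apply in_app_or in Hm; destruct Hm; eauto. Qed.

Lemma poly_over_impl {A} (P P' : A -> Prop) p :
  (forall a, P a -> P' a) -> poly_over P p -> poly_over P' p.
Proof. intros HP H m Hm a Ha; eauto. Qed.

Section Leibniz.
(* [along q a] is the atom [a] restricted to a line through the point [q],
   which sits at coordinate [base q]. *)
Variables (Pt A : Type) (along : Pt -> A -> R -> R) (base : Pt -> R).
Variables (Q : Pt -> Prop) (P : A -> Prop).

Hypothesis derivable_atom : forall a, P a -> exists p, poly_over P p /\
  forall q, Q q ->
    derivable_pt_lim (along q a) (base q) (poly_eval (fun b => along q b (base q)) p).

Lemma mono_derivable m : (forall a, In a m -> P a) -> exists p, poly_over P p /\
  forall q, Q q -> derivable_pt_lim (fun y => mono_eval (fun a => along q a y) m) (base q)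
                     (poly_eval (fun b => along q b (base q)) p).
Proof.
  induction m as [|a m IH]; intros Hm.
  - exists nil; split; [intros m [] | intros q _; simpl; apply dpl_const].
  - destruct (derivable_atom a (Hm a (or_introl eq_refl))) as [pa [HPa Da]].
    destruct IH as [pm [HPm Dm]]; [intros; apply Hm; right; auto|].
    exists (map (fun m' => m' ++ m) pa ++ map (cons a) pm). split.
    + apply poly_over_app; intros m' Hm' b Hb; apply in_map_iff in Hm';
        destruct Hm' as [m0 [<- Hm0]].
      * apply in_app_or in Hb; destruct Hb; [eapply HPa; eauto| apply Hm; right; auto].
      * destruct Hb as [<-|Hb]; [apply Hm; left; auto| eapply HPm; eauto].
    + intros q Qq. apply dpl_eq with (1 := dpl_mult _ _ _ _ _ (Da q Qq) (Dm q Qq)).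
      rewrite poly_eval_app, poly_eval_map_appr, poly_eval_map_cons; ring.
Qed.

Lemma poly_derivable p : poly_over P p -> exists p', poly_over P p' /\
  forall q, Q q -> derivable_pt_lim (fun y => poly_eval (fun a => along q a y) p) (base q)
                     (poly_eval (fun b => along q b (base q)) p').
Proof.
  induction p as [|m p IH]; intros Hp.
  - exists nil; split; [intros m [] | intros q _; simpl; apply dpl_const].
  - destruct (mono_derivable m) as [p1 [H1 D1]]; [intros; eapply Hp; [left|]; eauto|].
    destruct IH as [p2 [H2 D2]]; [intros m' Hm'; apply Hp; right; auto|].
    exists (p1 ++ p2); split; [apply poly_over_app; auto|].
    intros q Qq. rewrite poly_eval_app. exact (dpl_plus _ _ _ _ _ (D1 q Qq) (D2 q Qq)).
Qed.
End Leibniz.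

(** * Smooth functions of one variable *)

Section OneVariable.
Variable I : R -> Prop.
Hypothesis I_open : forall x, I x -> exists e, 0 < e /\ forall y, Rabs (y - x) < e -> I y.

(* [smooth_on] without its continuity clause, which differentiability implies. *)
Definition Cinf (f : R -> R) : Prop := exists S : (R -> R) -> Prop, S f /\
  forall g, S g -> exists g', S g' /\ forall y, I y -> derivable_pt_lim g y (g' y).

Lemma Cinf_derivable f y : Cinf f -> I y -> derivable_pt_lim f y (derivR f y).
Proof.
  intros [S [Sf HS]] Iy. destruct (HS f Sf) as [g' [_ Hg]].
  rewrite (derivR_eq _ _ _ (Hg y Iy)); auto.
Qed.

Lemma Cinf_continuity_pt f y : Cinf f -> I y -> continuity_pt f y.
Proof.
  intros Hf Iy. apply derivable_continuous_pt. exists (derivR f y). now apply Cinf_derivable.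
Qed.

Lemma derivable_pt_lim_on f g y l : I y -> (forall z, I z -> f z = g z) ->
  derivable_pt_lim f y l -> derivable_pt_lim g y l.
Proof.
  intros Iy H. destruct (I_open y Iy) as [e [He Hb]].
  apply (dpl_loc f g y l e); auto.
Qed.

Lemma Cinf_ext f g : Cinf f -> (forall y, I y -> f y = g y) -> Cinf g.
Proof.
  intros [S [Sf HS]] Hfg.
  exists (fun h => exists f, S f /\ forall y, I y -> f y = h y). split; [eauto|].
  intros h [f0 [Sf0 Hf0]]. destruct (HS f0 Sf0) as [g' [Sg' Hg']].
  exists g'; split; [exists g'; auto|].
  intros y Iy. eapply derivable_pt_lim_on; eauto.
Qed.

Lemma Cinf_derivR f : Cinf f -> Cinf (derivR f).
Proof.
  intros Hf. destruct Hf as [S [Sf HS]] eqn:E. destruct (HS f Sf) as [g' [Sg' Hg']].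
  apply Cinf_ext with g'; [exists S; auto|].
  intros y Iy. symmetry; apply derivR_eq; auto.
Qed.

Lemma Cinf_const c : Cinf (fun _ => c).
Proof.
  exists (fun h => exists c, h = fun _ => c). split; [eauto|].
  intros g [c0 ->]. exists (fun _ => 0). split; [eauto|]. intros; apply dpl_const.
Qed.

Definition derivative_closed (P : (R -> R) -> Prop) : Prop :=
  forall f, P f -> exists p, poly_over P p /\
    forall y, I y -> derivable_pt_lim f y (poly_eval (fun g => g y) p).

Lemma Cinf_poly P : derivative_closed P ->
  forall p, poly_over P p -> Cinf (fun y => poly_eval (fun g => g y) p).
Proof.
  intros HP p Hp.
  exists (fun h => exists p, poly_over P p /\ forall y, I y -> poly_eval (fun g => g y) p = h y).
  split; [eauto|].
  intros h [p0 [Hp0 Eh]].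
  destruct (poly_derivable R (R -> R) (fun y g => g) (fun y => y) I P HP p0 Hp0) as [p' [Hp' D']].
  exists (fun y => poly_eval (fun g => g y) p'). split; [eauto|].
  intros y Iy. eapply derivable_pt_lim_on; [eauto| exact Eh| apply D'; auto].
Qed.

Lemma derivative_closed_Cinf : derivative_closed Cinf.
Proof.
  intros f Hf. exists ((derivR f :: nil) :: nil). split.
  - intros m [<-|[]] g [<-|[]]. now apply Cinf_derivR.
  - intros y Iy. apply dpl_eq with (1 := Cinf_derivable f y Hf Iy). simpl; ring.
Qed.

Lemma Cinf_mult f g : Cinf f -> Cinf g -> Cinf (fun y => f y * g y).
Proof.
  intros Hf Hg. apply Cinf_ext with (fun y => poly_eval (fun h => h y) ((f :: g :: nil) :: nil)).
  - apply (Cinf_poly _ derivative_closed_Cinf). intros m [<-|[]] h [<-|[<-|[]]]; auto.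
  - intros; simpl; ring.
Qed.

Lemma Cinf_plus f g : Cinf f -> Cinf g -> Cinf (fun y => f y + g y).
Proof.
  intros Hf Hg.
  apply Cinf_ext with (fun y => poly_eval (fun h => h y) ((f :: nil) :: (g :: nil) :: nil)).
  - apply (Cinf_poly _ derivative_closed_Cinf). intros m [<-|[<-|[]]] h [<-|[]]; auto.
  - intros; simpl; ring.
Qed.

Lemma Cinf_scal c f : Cinf f -> Cinf (fun y => c * f y).
Proof. intros; apply (Cinf_mult (fun _ => c)); auto; apply Cinf_const. Qed.

Lemma Cinf_inv f : Cinf f -> (forall y, I y -> f y <> 0) -> Cinf (fun y => / f y).
Proof.
  intros Hf Hnz.
  set (P := fun g => Cinf g \/ forall y, I y -> g y = / f y).
  assert (HP : derivative_closed P).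
  { intros g [Hg | Eg].
    - destruct (derivative_closed_Cinf g Hg) as [p [Hp Dp]].
      exists p; split; [|exact Dp]. apply (poly_over_impl Cinf); [now left| exact Hp].
    - (* (1/f)' = -1 * f' * (1/f) * (1/f) *)
      exists (((fun _ => -1) :: derivR f :: g :: g :: nil) :: nil). split.
      + intros m [<-|[]] h Hh.
        destruct Hh as [<-|[<-|[<-|[<-|[]]]]]; try (right; exact Eg); left.
        * apply Cinf_const.
        * now apply Cinf_derivR.
      + intros y Iy.
        apply derivable_pt_lim_on with (fun z => / f z); [auto| intros; symmetry; auto|].
        apply dpl_eq with (1 := dpl_inv f y _ (Cinf_derivable f y Hf Iy) (Hnz y Iy)).
        simpl. rewrite Eg by exact Iy. field. auto. }
  apply Cinf_ext with (fun y => poly_eval (fun g => g y) (((fun z => / f z) :: nil) :: nil)).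
  - apply (Cinf_poly P HP). intros m [<-|[]] h [<-|[]]. now right.
  - intros; simpl; ring.
Qed.

End OneVariable.

Lemma Cinf_of_smooth_on I f : smooth_on I f -> Cinf I f.
Proof.
  intros [S [Sf HS]]. exists S; split; auto. intros g Sg. now destruct (HS g Sg) as [H _].
Qed.

(** * Symbolic calculus of weighted monomials *)

Definition term : Type := ((R -> R) * list nat)%type.

(* Leibniz rule for [prod_j pDxn (gs_j) v]: one factor gets one more derivative. *)
Fixpoint bump_orders (gs : list nat) : list (list nat) :=
  match gs with
  | nil => nil
  | g :: gs' => (S g :: gs') :: map (cons g) (bump_orders gs')
  end.

Definition Dx_term (bg : term) : list term :=
  (derivR (fst bg), 1%nat :: snd bg) :: map (fun gs => (fst bg, gs)) (bump_orders (snd bg)).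
Definition Dx_terms (l : list term) : list term := flat_map Dx_term l.
Definition mul_terms (l1 l2 : list term) : list term :=
  flat_map (fun b1 => map (fun b2 => (fun y => fst b1 y * fst b2 y, snd b1 ++ snd b2)) l2) l1.
Definition scale_terms (b : R -> R) (l : list term) : list term :=
  map (fun c => (fun y => b y * fst c y, snd c)) l.
Definition L_terms (alpha : R -> R) (l : list term) : list term := scale_terms alpha (Dx_terms l).

(* [vk_terms alpha n] represents v_(n+1). *)
Fixpoint vk_terms (alpha : R -> R) (n : nat) : list term :=
  match n with
  | O => (alpha, 1%nat :: nil) :: nil
  | S n' => L_terms alpha (vk_terms alpha n')
  end.

Lemma eval_terms_app l1 l2 v t x :
  eval_terms (l1 ++ l2) v t x = eval_terms l1 v t x + eval_terms l2 v t x.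
Proof. induction l1; simpl; [ring| rewrite IHl1; ring]. Qed.

Lemma prod_derivs_app g1 g2 v t x :
  prod_derivs (g1 ++ g2) v t x = prod_derivs g1 v t x * prod_derivs g2 v t x.
Proof. induction g1; simpl; [ring| rewrite IHg1; ring]. Qed.

Lemma eval_terms_mul l1 l2 v t x :
  eval_terms (mul_terms l1 l2) v t x = eval_terms l1 v t x * eval_terms l2 v t x.
Proof.
  induction l1 as [|b1 l1 IH]; simpl; [ring|].
  unfold mul_terms in *; simpl. rewrite eval_terms_app, IH.
  enough (E : eval_terms (map (fun b2 => (fun y => fst b1 y * fst b2 y, snd b1 ++ snd b2)) l2) v t x
              = fst b1 (v t x) * prod_derivs (snd b1) v t x * eval_terms l2 v t x)
    by (rewrite E; ring).
  clear IH. induction l2; simpl; [ring| rewrite IHl2, prod_derivs_app; ring].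
Qed.

Lemma eval_terms_scale b l v t x :
  eval_terms (scale_terms b l) v t x = b (v t x) * eval_terms l v t x.
Proof. induction l; simpl; [ring| rewrite IHl; ring]. Qed.

Lemma eval_terms_Dx_term bg v t x : eval_terms (Dx_term bg) v t x =
  derivR (fst bg) (v t x) * pDx v t x * prod_derivs (snd bg) v t x
  + fst bg (v t x) * poly_eval (fun g => pDxn g v t x) (bump_orders (snd bg)).
Proof.
  unfold Dx_term; simpl. f_equal; [ring|].
  induction (bump_orders (snd bg)); simpl; [ring| rewrite IHl; unfold prod_derivs, mono_eval; ring].
Qed.

Lemma weight_app a b : weight (a ++ b) = (weight a + weight b)%nat.
Proof. induction a; simpl; auto. rewrite IHa; lia. Qed.

Definition graded (w m : nat) (l : list term) : Prop :=
  forall bg, In bg l -> weight (snd bg) = w /\ forall g, In g (snd bg) -> (1 <= g <= m)%nat.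

Definition admissible (k : nat) (l : list term) : Prop :=
  forall bg, In bg l -> (weight (snd bg) = (k + 1)%nat \/ weight (snd bg) = (k + 3)%nat) /\
    forall g, In g (snd bg) -> (1 <= g <= k)%nat.

Lemma In_bump_orders gs gs' : In gs' (bump_orders gs) -> weight gs' = S (weight gs) /\
  forall g', In g' gs' -> exists g, In g gs /\ (g' = g \/ g' = S g).
Proof.
  revert gs'; induction gs as [|g gs IH]; simpl; intros gs' H; [destruct H|].
  destruct H as [<- | H].
  - split; [simpl; lia|]. intros g' [<-|Hg']; [exists g | exists g']; auto.
  - apply in_map_iff in H. destruct H as [m [<- Hm]]. destruct (IH m Hm) as [Hw Hg].
    split; [simpl; lia|]. intros g' [<-|Hg']; [exists g; auto|].
    destruct (Hg g' Hg') as [g0 [? ?]]; exists g0; auto.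
Qed.

Lemma In_L_terms alpha l c : In c (L_terms alpha l) -> exists b, In b l /\
  weight (snd c) = S (weight (snd b)) /\
  forall g', In g' (snd c) -> g' = 1%nat \/ exists g, In g (snd b) /\ (g' = g \/ g' = S g).
Proof.
  intros Hc. apply in_map_iff in Hc. destruct Hc as [c' [<- Hc]]. simpl.
  apply in_flat_map in Hc. destruct Hc as [b [Hb Hc]]. exists b. split; [exact Hb|].
  destruct Hc as [<- | Hc]; simpl.
  - split; [reflexivity|]. intros g' [<-|Hg']; [left| right; exists g']; auto.
  - apply in_map_iff in Hc. destruct Hc as [gs [<- Hgs]]. simpl.
    destruct (In_bump_orders _ _ Hgs) as [Hw Hg]. split; [exact Hw|]. auto.
Qed.

Lemma graded_app w m l1 l2 : graded w m l1 -> graded w m l2 -> graded w m (l1 ++ l2).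
Proof. intros H1 H2 bg H. apply in_app_or in H; destruct H; auto. Qed.

Lemma graded_scale b w m l : graded w m l -> graded w m (scale_terms b l).
Proof. intros H bg Hbg. apply in_map_iff in Hbg. destruct Hbg as [c [<- Hc]]. exact (H c Hc). Qed.

Lemma graded_mul w1 w2 m l1 l2 : graded w1 m l1 -> graded w2 m l2 ->
  graded (w1 + w2) m (mul_terms l1 l2).
Proof.
  intros H1 H2 bg Hbg. apply in_flat_map in Hbg. destruct Hbg as [b1 [Hb1 Hbg]].
  apply in_map_iff in Hbg. destruct Hbg as [b2 [<- Hb2]]. simpl.
  destruct (H1 _ Hb1) as [W1 G1], (H2 _ Hb2) as [W2 G2].
  rewrite weight_app. split; [lia|]. intros g Hg. apply in_app_or in Hg. destruct Hg; auto.
Qed.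

Lemma graded_L alpha w m l : graded w m l -> graded (S w) (S m) (L_terms alpha l).
Proof.
  intros H c Hc. destruct (In_L_terms _ _ _ Hc) as [b [Hb [Hw Hg]]]. destruct (H b Hb) as [Wb Gb].
  split; [lia|]. intros g' Hg'.
  destruct (Hg g' Hg') as [->|[g [Hin [-> | ->]]]]; [lia| |]; specialize (Gb g Hin); lia.
Qed.

Lemma graded_weaken w m m' l : (m <= m')%nat -> graded w m l -> graded w m' l.
Proof.
  intros Hm H bg Hbg. destruct (H bg Hbg) as [W G]. split; auto.
  intros g Hg; specialize (G g Hg); lia.
Qed.

Lemma graded_vk_terms alpha n : graded (S n) (S n) (vk_terms alpha n).
Proof.
  induction n; simpl; [|now apply graded_L].
  intros bg [<-|[]]. split; [reflexivity|]. intros g [<-|[]]; lia.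
Qed.

Lemma admissible_app k l1 l2 : admissible k l1 -> admissible k l2 -> admissible k (l1 ++ l2).
Proof. intros H1 H2 bg H. apply in_app_or in H; destruct H; auto. Qed.

Lemma admissible_of_graded k w m l : graded w m l -> (w = k + 1 \/ w = k + 3)%nat -> (m <= k)%nat ->
  admissible k l.
Proof.
  intros H Hw Hm bg Hbg. destruct (H bg Hbg) as [W G]. split; [lia|].
  intros g Hg; specialize (G g Hg); lia.
Qed.

Lemma admissible_L alpha k l : admissible k l -> admissible (S k) (L_terms alpha l).
Proof.
  intros H c Hc. destruct (In_L_terms _ _ _ Hc) as [b [Hb [Hw Hg]]]. destruct (H b Hb) as [Wb Gb].
  split; [lia|]. intros g' Hg'.
  destruct (Hg g' Hg') as [->|[g [Hin [-> | ->]]]]; [lia| |]; specialize (Gb g Hin); lia.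
Qed.

Section Coefficients.
Variable I : R -> Prop.
Hypothesis I_open : forall x, I x -> exists e, 0 < e /\ forall y, Rabs (y - x) < e -> I y.

Definition smooth_coefs (l : list term) : Prop := forall bg, In bg l -> Cinf I (fst bg).

Lemma smooth_coefs_app l1 l2 : smooth_coefs l1 -> smooth_coefs l2 -> smooth_coefs (l1 ++ l2).
Proof. intros H1 H2 bg H. apply in_app_or in H; destruct H; auto. Qed.

Lemma smooth_coefs_scale b l : Cinf I b -> smooth_coefs l -> smooth_coefs (scale_terms b l).
Proof.
  intros Hb H bg Hbg. apply in_map_iff in Hbg. destruct Hbg as [c [<- Hc]].
  apply Cinf_mult; auto.
Qed.

Lemma smooth_coefs_mul l1 l2 : smooth_coefs l1 -> smooth_coefs l2 -> smooth_coefs (mul_terms l1 l2).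
Proof.
  intros H1 H2 bg Hbg. apply in_flat_map in Hbg. destruct Hbg as [b1 [Hb1 Hbg]].
  apply in_map_iff in Hbg. destruct Hbg as [b2 [<- Hb2]]. apply Cinf_mult; auto.
Qed.

Lemma smooth_coefs_L alpha l : Cinf I alpha -> smooth_coefs l -> smooth_coefs (L_terms alpha l).
Proof.
  intros Ha H. apply smooth_coefs_scale; auto.
  intros bg Hbg. apply in_flat_map in Hbg. destruct Hbg as [b [Hb [<- | Hbg]]].
  - apply Cinf_derivR; auto.
  - apply in_map_iff in Hbg. destruct Hbg as [gs [<- _]]. exact (H b Hb).
Qed.

Lemma smooth_coefs_vk_terms alpha n : Cinf I alpha -> smooth_coefs (vk_terms alpha n).
Proof.
  intros Ha; induction n; simpl; [intros bg [<-|[]]; auto| now apply smooth_coefs_L].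
Qed.

End Coefficients.

Section ExpansionCoefficients.
Variables (alpha a : R -> R).

Definition phi (y : R) : R := derivR alpha y / alpha y ^ 2.

(* [binom2 k] is C(k-1, 2); the coefficient of phi' v_1^2 v_(k+1) in P[v_k]. *)
Definition binom2 (k : nat) : R := (INR k - 1) * (INR k - 2) / 2.
Definition ge2 (k : nat) : R := match k with 0%nat | 1%nat => 0 | _ => 1 end.

Definition G_terms (k : nat) : list term :=
  match k with
  | 0%nat | 1%nat => nil
  | _ => scale_terms (fun y => binom2 k * derivR phi y)
           (mul_terms (vk_terms alpha 0) (vk_terms alpha 0))
         ++ scale_terms (fun y => (binom2 k - 1) * phi y) (vk_terms alpha 1)
  end.

Definition Hv3_terms (k : nat) : list term :=
  match k with
  | 0%nat | 1%nat => nil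
  | _ => scale_terms (fun y => - phi y) (mul_terms (vk_terms alpha 2) (vk_terms alpha k))
  end.

Definition Ha_terms (k : nat) : list term :=
  scale_terms (fun y => - (derivR a y / alpha y)) (mul_terms (vk_terms alpha 0) (vk_terms alpha k)).

Fixpoint H_terms (k : nat) : list term :=
  match k with
  | 0%nat => nil
  | 1%nat => Ha_terms 0
  | S k' => mul_terms (L_terms alpha (G_terms k')) (vk_terms alpha k') ++ L_terms alpha (H_terms k')
            ++ Ha_terms k' ++ Hv3_terms k'
  end.

Lemma graded_G_terms k : graded 2 k (G_terms k).
Proof.
  destruct k as [|[|k]]; [intros bg []| intros bg []|].
  apply (graded_weaken 2 2); [lia|]. apply graded_app; apply graded_scale.
  - apply (graded_weaken 2 1); [lia|]. apply (graded_mul 1 1); apply graded_vk_terms.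
  - apply graded_vk_terms.
Qed.

Lemma graded_Ha_terms k : graded (k + 2) (S k) (Ha_terms k).
Proof.
  apply graded_scale. replace (k + 2)%nat with (1 + S k)%nat by lia.
  apply graded_mul; [apply (graded_weaken 1 1); [lia|]|]; apply graded_vk_terms.
Qed.

Lemma graded_Hv3_terms k : graded (k + 4) (S k) (Hv3_terms k).
Proof.
  destruct k as [|[|k]]; [intros bg []| intros bg []|].
  apply graded_scale. replace (S (S k) + 4)%nat with (3 + S (S (S k)))%nat by lia.
  apply graded_mul; [apply (graded_weaken 3 3); [lia|]|]; apply graded_vk_terms.
Qed.

Lemma admissible_H_terms k : (1 <= k)%nat -> admissible k (H_terms k).
Proof.
  induction k as [|k IH]; intros Hk; [lia|].
  destruct k as [|k].
  - apply (admissible_of_graded 1 2 1); [apply graded_Ha_terms| lia| lia].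
  - cbn [H_terms]. specialize (IH ltac:(lia)).
    repeat apply admissible_app.
    + apply (admissible_of_graded _ (3 + S (S k)) (S (S k))); [| lia| lia].
      apply graded_mul; [apply graded_L, graded_G_terms| apply graded_vk_terms].
    + now apply admissible_L.
    + apply (admissible_of_graded _ (S k + 2) (S (S k))); [apply graded_Ha_terms| lia| lia].
    + apply (admissible_of_graded _ (S k + 4) (S (S k))); [apply graded_Hv3_terms| lia| lia].
Qed.

Definition A_coef (k : nat) (y : R) : R :=
  (INR k - 1) * (derivR alpha y / alpha y) ^ 2 + alpha y * binom2 k * derivR phi y.
Definition B_coef (k : nat) (y : R) : R := alpha y * (binom2 k - ge2 k) * phi y.

Section Smoothness.
Variable I : R -> Prop.
Hypothesis I_open : forall x, I x -> exists e, 0 < e /\ forall y, Rabs (y - x) < e -> I y.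
Hypothesis alpha_smooth : Cinf I alpha.
Hypothesis a_smooth : Cinf I a.
Hypothesis alpha_neq0 : forall y, I y -> alpha y <> 0.

Lemma Cinf_phi : Cinf I phi.
Proof.
  apply Cinf_ext with (f := fun y => derivR alpha y * (/ alpha y * / alpha y)); auto.
  - apply Cinf_mult; [auto| now apply Cinf_derivR|].
    apply Cinf_mult; [auto| |]; now apply Cinf_inv.
  - intros y Iy. unfold phi. field. auto.
Qed.

Lemma smooth_coefs_G_terms k : smooth_coefs I (G_terms k).
Proof.
  destruct k as [|[|k]]; [intros bg []| intros bg []|]. cbn [G_terms].
  apply smooth_coefs_app; apply smooth_coefs_scale; auto.
  - apply Cinf_scal; auto. apply Cinf_derivR; auto. apply Cinf_phi.
  - apply smooth_coefs_mul; auto; apply smooth_coefs_vk_terms; auto.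
  - apply Cinf_scal; auto. apply Cinf_phi.
  - apply smooth_coefs_vk_terms; auto.
Qed.

Lemma smooth_coefs_Ha_terms k : smooth_coefs I (Ha_terms k).
Proof.
  apply smooth_coefs_scale;
    [auto| |apply smooth_coefs_mul; auto; apply smooth_coefs_vk_terms; auto].
  apply Cinf_ext with (f := fun y => -1 * (derivR a y * / alpha y)); auto.
  - apply Cinf_scal; [auto|].
    apply Cinf_mult; [auto| apply Cinf_derivR; auto| apply Cinf_inv; auto].
  - intros y Iy. unfold Rdiv. ring.
Qed.

Lemma smooth_coefs_Hv3_terms k : smooth_coefs I (Hv3_terms k).
Proof.
  destruct k as [|[|k]]; [intros bg []| intros bg []|].
  apply smooth_coefs_scale;
    [auto| |apply smooth_coefs_mul; auto; apply smooth_coefs_vk_terms; auto].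
  apply Cinf_ext with (f := fun y => -1 * phi y);
    [auto| apply Cinf_scal; [auto| apply Cinf_phi]| intros; ring].
Qed.

Lemma smooth_coefs_H_terms k : smooth_coefs I (H_terms k).
Proof.
  induction k as [|k IH]; [intros bg []|].
  destruct k as [|k]; [apply smooth_coefs_Ha_terms|].
  cbn [H_terms]. repeat apply smooth_coefs_app.
  - apply smooth_coefs_mul; auto.
    + apply smooth_coefs_L; auto. apply smooth_coefs_G_terms.
    + apply smooth_coefs_vk_terms; auto.
  - apply smooth_coefs_L; auto.
  - apply smooth_coefs_Ha_terms.
  - apply smooth_coefs_Hv3_terms.
Qed.

Lemma Cinf_A_coef k : Cinf I (A_coef k).
Proof.
  assert (Hq : Cinf I (fun y => derivR alpha y * / alpha y))
    by (apply Cinf_mult; [auto| apply Cinf_derivR; auto| apply Cinf_inv; auto]).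
  apply Cinf_ext with (f := fun y =>
    (INR k - 1) * (derivR alpha y * / alpha y * (derivR alpha y * / alpha y))
    + alpha y * (binom2 k * derivR phi y)); [auto| |].
  - apply Cinf_plus; [auto| |].
    + apply Cinf_scal; [auto|]. now apply Cinf_mult.
    + apply Cinf_mult; [auto..|]. apply Cinf_scal; [auto|]. apply Cinf_derivR; [auto|]. apply Cinf_phi.
  - intros y Iy. unfold A_coef. field. auto.
Qed.

Lemma Cinf_B_coef k : Cinf I (B_coef k).
Proof.
  apply Cinf_ext with (f := fun y => (binom2 k - ge2 k) * (alpha y * phi y)); [auto| |].
  - apply Cinf_scal; [auto|]. apply Cinf_mult; [auto..| apply Cinf_phi].
  - intros y Iy. unfold B_coef. ring.
Qed.

End Smoothness.
End ExpansionCoefficients.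

(** * Smooth functions of two variables *)

Lemma continuous2_at_2d g t x : continuous2_at g t x <-> continuity_2d_pt g t x.
Proof.
  split.
  - intros H eps. destruct (H eps (cond_pos eps)) as [d [Hd Hd2]].
    exists (mkposreal d Hd). simpl. auto.
  - intros H eps Heps. destruct (H (mkposreal eps Heps)) as [d Hd].
    exists d; split; [apply cond_pos| auto].
Qed.

Lemma Derive_eq f x l : derivable_pt_lim f x l -> Derive f x = l.
Proof. intro H. apply is_derive_unique, is_derive_Reals, H. Qed.

Section TwoVariables.
Variables (I : R -> Prop) (U : R -> R -> Prop) (v : R -> R -> R).
Hypothesis I_open : forall x, I x -> exists e, 0 < e /\ forall y, Rabs (y - x) < e -> I y.
Hypothesis U_open : open2 U.
Hypothesis v_smooth : smooth2_on U v.
Hypothesis v_in_I : forall t x, U t x -> I (v t x).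

Lemma locally_2d_on (P : R -> R -> Prop) t x : U t x -> (forall s y, U s y -> P s y) ->
  Hierarchy.locally_2d P t x.
Proof.
  intros Ut HP. destruct (U_open t x Ut) as [e [He Hb]].
  exists (mkposreal e He). simpl. auto.
Qed.

Lemma derivable_x_on f g t x l : U t x -> (forall s y, U s y -> f s y = g s y) ->
  derivable_pt_lim (fun y => f t y) x l -> derivable_pt_lim (fun y => g t y) x l.
Proof.
  intros Ut H. destruct (U_open t x Ut) as [e [He Hb]].
  apply (dpl_loc _ _ x l e He). intros y Hy; apply H, Hb; auto.
  rewrite Rminus_diag, Rabs_R0; lra.
Qed.

Lemma derivable_t_on f g t x l : U t x -> (forall s y, U s y -> f s y = g s y) ->
  derivable_pt_lim (fun s => f s x) t l -> derivable_pt_lim (fun s => g s x) t l.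
Proof.
  intros Ut H. destruct (U_open t x Ut) as [e [He Hb]].
  apply (dpl_loc _ _ t l e He). intros s Hs; apply H, Hb; auto.
  rewrite Rminus_diag, Rabs_R0; lra.
Qed.

Lemma pDx_on f g t x l : U t x -> (forall s y, U s y -> f s y = g s y) ->
  derivable_pt_lim (fun y => g t y) x l -> pDx f t x = l.
Proof.
  intros Ut H D. apply derivR_eq. apply derivable_x_on with g; auto.
  intros; symmetry; auto.
Qed.

Lemma continuity_2d_pt_on f g t x : U t x -> (forall s y, U s y -> f s y = g s y) ->
  continuity_2d_pt f t x -> continuity_2d_pt g t x.
Proof. intros Ut H. apply continuity_2d_pt_ext_loc, locally_2d_on; auto. Qed.

Lemma smooth2_dx w t x : smooth2_on U w -> U t x ->
  derivable_pt_lim (fun y => w t y) x (pDx w t x).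
Proof.
  intros [S [Sw HS]] Ut. destruct (HS w Sw) as [_ [[gx [_ Hgx]] _]].
  unfold pDx. rewrite (derivR_eq _ _ _ (Hgx t x Ut)); auto.
Qed.

Lemma smooth2_dt w t x : smooth2_on U w -> U t x ->
  derivable_pt_lim (fun s => w s x) t (pDt w t x).
Proof.
  intros [S [Sw HS]] Ut. destruct (HS w Sw) as [[gt [_ Hgt]] _].
  unfold pDt. rewrite (derivR_eq _ _ _ (Hgt t x Ut)); auto.
Qed.

Lemma dx_comp b t x : Cinf I b -> U t x ->
  derivable_pt_lim (fun y => b (v t y)) x (derivR b (v t x) * pDx v t x).
Proof.
  intros Hb Ut. apply dpl_eq with (1 := dpl_comp _ _ _ _ _ (smooth2_dx v t x v_smooth Ut)
                                      (Cinf_derivable I b _ Hb (v_in_I t x Ut))).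
  ring.
Qed.

Lemma dt_comp b t x : Cinf I b -> U t x ->
  derivable_pt_lim (fun s => b (v s x)) t (derivR b (v t x) * pDt v t x).
Proof.
  intros Hb Ut. apply dpl_eq with (1 := dpl_comp _ _ _ _ _ (smooth2_dt v t x v_smooth Ut)
                                      (Cinf_derivable I b _ Hb (v_in_I t x Ut))).
  ring.
Qed.

Lemma smooth2_continuity w t x : smooth2_on U w -> U t x -> continuity_2d_pt w t x.
Proof.
  intros [S [Sw HS]] Ut. destruct (HS w Sw) as [_ [_ Hc]]. now apply continuous2_at_2d, Hc.
Qed.

Lemma smooth2_ext w w' : smooth2_on U w -> (forall t x, U t x -> w t x = w' t x) ->
  smooth2_on U w'.
Proof.
  intros [S [Sw HS]] E.
  exists (fun h => exists g, S g /\ forall t x, U t x -> g t x = h t x). split; [eauto|].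
  intros h [g [Sg Eg]]. destruct (HS g Sg) as [[gt [Sgt Hgt]] [[gx [Sgx Hgx]] Hc]].
  split; [|split].
  - exists gt; split; [exists gt; auto|]. intros t x Ut; eapply derivable_t_on; eauto.
  - exists gx; split; [exists gx; auto|]. intros t x Ut; eapply derivable_x_on; eauto.
  - intros t x Ut. apply continuous2_at_2d. eapply continuity_2d_pt_on; eauto.
    now apply continuous2_at_2d, Hc.
Qed.

Lemma smooth2_pDx w : smooth2_on U w -> smooth2_on U (pDx w).
Proof.
  intros Hw. destruct Hw as [S [Sw HS]] eqn:E. destruct (HS w Sw) as [_ [[gx [Sgx Hgx]] _]].
  apply smooth2_ext with gx; [exists S; auto|].
  intros t x Ut. symmetry; apply derivR_eq; auto.
Qed.

Lemma smooth2_pDt w : smooth2_on U w -> smooth2_on U (pDt w).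
Proof.
  intros Hw. destruct Hw as [S [Sw HS]] eqn:E. destruct (HS w Sw) as [[gt [Sgt Hgt]] _].
  apply smooth2_ext with gt; [exists S; auto|].
  intros t x Ut. symmetry; apply derivR_eq; auto.
Qed.

Lemma smooth2_schwarz w t x : smooth2_on U w -> U t x ->
  pDt (pDx w) t x = pDx (pDt w) t x.
Proof.
  intros Hw Ut.
  set (Dx := fun s y => Derive (fun z => w s z) y).
  set (Dt := fun s y => Derive (fun z => w z y) s).
  assert (EDx : forall s y, U s y -> pDx w s y = Dx s y)
    by (intros s y Usy; symmetry; apply Derive_eq; apply smooth2_dx; auto).
  assert (EDt : forall s y, U s y -> pDt w s y = Dt s y)
    by (intros s y Usy; symmetry; apply Derive_eq; apply smooth2_dt; auto).
  assert (DDx : forall s y, U s y -> derivable_pt_lim (fun z => Dx z y) s (pDt (pDx w) s y))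
    by (intros s y Usy; apply derivable_t_on with (pDx w); auto;
        apply smooth2_dt; auto; apply smooth2_pDx; auto).
  assert (DDt : forall s y, U s y -> derivable_pt_lim (fun z => Dt s z) y (pDx (pDt w) s y))
    by (intros s y Usy; apply derivable_x_on with (pDt w); auto;
        apply smooth2_dx; auto; apply smooth2_pDt; auto).
  rewrite <- (Derive_eq _ _ _ (DDx t x Ut)), <- (Derive_eq _ _ _ (DDt t x Ut)).
  apply Schwarz.
  - apply locally_2d_on; auto. intros s y Usy.
    repeat split; eexists; apply is_derive_Reals;
      [apply smooth2_dt | apply smooth2_dx | apply DDx | apply DDt]; auto.
  - apply continuity_2d_pt_on with (pDt (pDx w)); auto.
    + intros s y Usy; symmetry; apply Derive_eq, DDx; auto.
    + apply smooth2_continuity; auto; apply smooth2_pDt, smooth2_pDx; auto.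
  - apply continuity_2d_pt_on with (pDx (pDt w)); auto.
    + intros s y Usy; symmetry; apply Derive_eq, DDt; auto.
    + apply smooth2_continuity; auto; apply smooth2_pDx, smooth2_pDt; auto.
Qed.

(* Compositions b(v) are atoms so that the chain rule stays inside the polynomial algebra. *)
Definition chain_atom (w : R -> R -> R) : Prop := smooth2_on U w \/
  exists b, Cinf I b /\ forall t x, U t x -> w t x = b (v t x).

Lemma chain_atom_dx : forall w, chain_atom w -> exists p, poly_over chain_atom p /\
  forall q, U (fst q) (snd q) -> derivable_pt_lim (fun y => w (fst q) y) (snd q)
     (poly_eval (fun w' => w' (fst q) (snd q)) p).
Proof.
  intros w [Hw | [b [Hb Eb]]].
  - exists ((pDx w :: nil) :: nil). split.
    + intros m [<-|[]] c [<-|[]]. left; now apply smooth2_pDx.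
    + intros [t x] Ut. apply dpl_eq with (1 := smooth2_dx w t x Hw Ut). simpl; ring.
  - exists (((fun t x => derivR b (v t x)) :: pDx v :: nil) :: nil). split.
    + intros m [<-|[]] c [<-|[<-|[]]].
      * right. exists (derivR b); split; auto. now apply Cinf_derivR.
      * left; now apply smooth2_pDx.
    + intros [t x] Ut; simpl in *.
      apply derivable_x_on with (fun s y => b (v s y)); auto; [intros; symmetry; auto|].
      apply dpl_eq with (1 := dx_comp b t x Hb Ut). ring.
Qed.

Lemma chain_atom_dt : forall w, chain_atom w -> exists p, poly_over chain_atom p /\
  forall q, U (fst q) (snd q) -> derivable_pt_lim (fun s => w s (snd q)) (fst q)
     (poly_eval (fun w' => w' (fst q) (snd q)) p).
Proof.
  intros w [Hw | [b [Hb Eb]]].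
  - exists ((pDt w :: nil) :: nil). split.
    + intros m [<-|[]] c [<-|[]]. left; now apply smooth2_pDt.
    + intros [t x] Ut. apply dpl_eq with (1 := smooth2_dt w t x Hw Ut). simpl; ring.
  - exists (((fun t x => derivR b (v t x)) :: pDt v :: nil) :: nil). split.
    + intros m [<-|[]] c [<-|[<-|[]]].
      * right. exists (derivR b); split; auto. now apply Cinf_derivR.
      * left; now apply smooth2_pDt.
    + intros [t x] Ut; simpl in *.
      apply derivable_t_on with (fun s y => b (v s y)); auto; [intros; symmetry; auto|].
      apply dpl_eq with (1 := dt_comp b t x Hb Ut). ring.
Qed.

Lemma chain_atom_continuity w t x : chain_atom w -> U t x -> continuity_2d_pt w t x.
Proof.
  intros [Hw | [b [Hb Eb]]] Ut; [now apply smooth2_continuity|].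
  apply continuity_2d_pt_on with (fun s y => b (v s y)); auto; [intros; symmetry; auto|].
  apply continuity_1d_2d_pt_comp;
    [apply (Cinf_continuity_pt I); auto| now apply smooth2_continuity].
Qed.

Lemma poly_continuity p t x : poly_over chain_atom p -> U t x ->
  continuity_2d_pt (fun s y => poly_eval (fun w => w s y) p) t x.
Proof.
  intros Hp Ut. induction p as [|m p IH]; simpl; [apply continuity_2d_pt_const|].
  apply continuity_2d_pt_plus; [| apply IH; intros m' Hm'; apply Hp; right; auto].
  assert (Hm : forall w, In w m -> chain_atom w) by (intros; eapply Hp; [left|]; eauto).
  clear IH Hp. induction m as [|w m IHm]; simpl; [apply continuity_2d_pt_const|].
  apply continuity_2d_pt_mult;
    [apply chain_atom_continuity; auto; apply Hm; left; auto|
     apply IHm; intros; apply Hm; right; auto].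
Qed.

Lemma smooth2_poly p : poly_over chain_atom p ->
  smooth2_on U (fun t x => poly_eval (fun w => w t x) p).
Proof.
  intros Hp.
  exists (fun h => exists p, poly_over chain_atom p /\
                   forall t x, U t x -> h t x = poly_eval (fun w => w t x) p).
  split; [eauto|].
  intros h [p0 [Hp0 Eh]]. split; [|split].
  - destruct (poly_derivable (R * R) _ (fun q w s => w s (snd q)) fst
      (fun q => U (fst q) (snd q)) chain_atom chain_atom_dt p0 Hp0) as [p' [Hp' D']].
    exists (fun t x => poly_eval (fun w => w t x) p'). split; [eauto|].
    intros t x Ut. apply derivable_t_on with (fun s y => poly_eval (fun w => w s y) p0); auto.
    + intros; symmetry; auto.
    + exact (D' (t, x) Ut).
  - destruct (poly_derivable (R * R) _ (fun q w y => w (fst q) y) snd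
      (fun q => U (fst q) (snd q)) chain_atom chain_atom_dx p0 Hp0) as [p' [Hp' D']].
    exists (fun t x => poly_eval (fun w => w t x) p'). split; [eauto|].
    intros t x Ut. apply derivable_x_on with (fun s y => poly_eval (fun w => w s y) p0); auto.
    + intros; symmetry; auto.
    + exact (D' (t, x) Ut).
  - intros t x Ut. apply continuous2_at_2d.
    apply continuity_2d_pt_on with (fun s y => poly_eval (fun w => w s y) p0); auto.
    + intros; symmetry; auto.
    + now apply poly_continuity.
Qed.

Lemma smooth2_mult w1 w2 : smooth2_on U w1 -> smooth2_on U w2 ->
  smooth2_on U (fun t x => w1 t x * w2 t x).
Proof.
  intros H1 H2.
  apply smooth2_ext with (fun t x => poly_eval (fun w => w t x) ((w1 :: w2 :: nil) :: nil)).
  - apply smooth2_poly. intros m [<-|[]] c [<-|[<-|[]]]; left; auto.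
  - intros; simpl; ring.
Qed.

Lemma smooth2_comp b : Cinf I b -> smooth2_on U (fun t x => b (v t x)).
Proof.
  intros Hb.
  apply smooth2_ext
    with (fun t x => poly_eval (fun w => w t x) (((fun t x => b (v t x)) :: nil) :: nil)).
  - apply smooth2_poly. intros m [<-|[]] c [<-|[]]; right; eauto.
  - intros; simpl; ring.
Qed.

Lemma smooth2_Lop alpha w : Cinf I alpha -> smooth2_on U w -> smooth2_on U (Lop alpha v w).
Proof.
  intros Ha Hw. apply smooth2_mult; [now apply smooth2_comp| now apply smooth2_pDx].
Qed.

Lemma smooth2_pDxn n : smooth2_on U (pDxn n v).
Proof. induction n; simpl; auto. now apply smooth2_pDx. Qed.

Lemma smooth2_vk alpha k : Cinf I alpha -> smooth2_on U (vk alpha v k).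
Proof. intros Ha; induction k; simpl; auto. now apply smooth2_Lop. Qed.

(** * The equation for v_k *)

Variables (alpha a : R -> R).
Hypothesis alpha_smooth : Cinf I alpha.
Hypothesis a_smooth : Cinf I a.
Hypothesis alpha_pos : forall y, I y -> 0 < alpha y.
Hypothesis v_solution : forall t x, U t x -> Pop alpha a v v t x = 0.

Lemma alpha_neq0 y : I y -> alpha y <> 0.
Proof. intros Iy. specialize (alpha_pos y Iy). lra. Qed.

Lemma alpha_v_neq0 t x : U t x -> alpha (v t x) <> 0.
Proof. intros Ut. exact (alpha_neq0 _ (v_in_I t x Ut)). Qed.

Lemma dx_prod_derivs gs t x : U t x ->
  derivable_pt_lim (fun y => prod_derivs gs v t y) x
    (poly_eval (fun g => pDxn g v t x) (bump_orders gs)).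
Proof.
  intros Ut. induction gs as [|g gs IH]; simpl; [apply dpl_const|].
  apply dpl_eq with (1 := dpl_mult _ _ _ _ _
    (smooth2_dx _ t x (smooth2_pDxn g) Ut) IH).
  rewrite poly_eval_map_cons; reflexivity.
Qed.

Lemma dx_eval_terms l t x : smooth_coefs I l -> U t x ->
  derivable_pt_lim (fun y => eval_terms l v t y) x (eval_terms (Dx_terms l) v t x).
Proof.
  intros Hl Ut. induction l as [|bg l IH]; [simpl; apply dpl_const|].
  change (Dx_terms (bg :: l)) with (Dx_term bg ++ Dx_terms l).
  rewrite eval_terms_app, eval_terms_Dx_term. simpl.
  apply dpl_plus; [| apply IH; intros b Hb; apply Hl; right; auto].
  apply dpl_eq with (1 := dpl_mult _ _ _ _ _ (dx_comp _ t x (Hl bg (or_introl eq_refl)) Ut)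
                            (dx_prod_derivs (snd bg) t x Ut)).
  ring.
Qed.

Lemma eval_vk_terms n t x : U t x -> eval_terms (vk_terms alpha n) v t x = vk alpha v (S n) t x.
Proof.
  revert t x. induction n; intros t x Ut; [simpl; unfold Lop; ring|].
  simpl vk_terms. unfold L_terms. rewrite eval_terms_scale.
  change (vk alpha v (S (S n)) t x) with (alpha (v t x) * pDx (vk alpha v (S n)) t x).
  f_equal. symmetry. apply pDx_on with (fun s y => eval_terms (vk_terms alpha n) v s y).
  - exact Ut.
  - intros s y Usy. symmetry. now apply IHn.
  - apply dx_eval_terms; [now apply smooth_coefs_vk_terms| exact Ut].
Qed.

Lemma pDx_vk n t x : U t x -> pDx (vk alpha v n) t x = vk alpha v (S n) t x / alpha (v t x).
Proof.
  intros Ut. change (vk alpha v (S n) t x) with (alpha (v t x) * pDx (vk alpha v n) t x).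
  field. now apply alpha_v_neq0.
Qed.

Lemma pDx_Lop w t x : smooth2_on U w -> U t x ->
  pDx (Lop alpha v w) t x =
  derivR alpha (v t x) * pDx v t x * pDx w t x + alpha (v t x) * pDx (pDx w) t x.
Proof.
  intros Hw Ut. apply derivR_eq.
  apply dpl_eq with (1 := dpl_mult _ _ _ _ _ (dx_comp alpha t x alpha_smooth Ut)
                            (smooth2_dx _ t x (smooth2_pDx w Hw) Ut)).
  reflexivity.
Qed.

Lemma pDt_Lop w t x : smooth2_on U w -> U t x ->
  pDt (Lop alpha v w) t x =
  derivR alpha (v t x) * pDt v t x * pDx w t x + alpha (v t x) * pDt (pDx w) t x.
Proof.
  intros Hw Ut. apply derivR_eq.
  apply dpl_eq with (1 := dpl_mult _ _ _ _ _ (dt_comp alpha t x alpha_smooth Ut)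
                            (smooth2_dt _ t x (smooth2_pDx w Hw) Ut)).
  reflexivity.
Qed.

Lemma pDx_Pop w t x : smooth2_on U w -> U t x ->
  pDx (Pop alpha a v w) t x =
  pDx (pDt w) t x + derivR a (v t x) * pDx v t x * pDx w t x + a (v t x) * pDx (pDx w) t x
  + pDx (pDx (Lop alpha v (Lop alpha v w))) t x.
Proof.
  intros Hw Ut. apply derivR_eq. unfold Pop.
  assert (HL2 : smooth2_on U (Lop alpha v (Lop alpha v w)))
    by (repeat apply smooth2_Lop; auto).
  apply dpl_eq with (pDx (pDt w) t x
    + (derivR a (v t x) * pDx v t x * pDx w t x + a (v t x) * pDx (pDx w) t x)
    + pDx (pDx (Lop alpha v (Lop alpha v w))) t x); [|ring].
  apply dpl_plus; [apply dpl_plus|].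
  - apply smooth2_dx; auto. now apply smooth2_pDt.
  - apply (dpl_mult (fun y => a (v t y)) (fun y => pDx w t y));
      [now apply dx_comp| apply smooth2_dx; auto; now apply smooth2_pDx].
  - apply smooth2_dx; auto. now apply smooth2_pDx.
Qed.

Lemma Pop_Lop w t x : smooth2_on U w -> U t x ->
  Pop alpha a v (Lop alpha v w) t x =
  alpha (v t x) * pDx (Pop alpha a v w) t x
  - derivR a (v t x) / alpha (v t x) * vk alpha v 1 t x * Lop alpha v w t x
  + phi alpha (v t x) * (vk alpha v 1 t x * Lop alpha v (Lop alpha v (Lop alpha v w)) t x
                         - vk alpha v 3 t x * Lop alpha v w t x).
Proof.
  intros Hw Ut.
  assert (Hn := alpha_v_neq0 t x Ut).
  assert (HL2 : smooth2_on U (Lop alpha v (Lop alpha v w)))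
    by (repeat apply smooth2_Lop; auto).
  assert (vt : pDt v t x = - a (v t x) * pDx v t x - vk alpha v 3 t x / alpha (v t x)).
  { pose proof (v_solution t x Ut) as E. unfold Pop in E.
    change (vk alpha v 3 t x) with (alpha (v t x) * pDx (Lop alpha v (Lop alpha v v)) t x).
    field_simplify; [lra| exact Hn]. }
  unfold Pop at 1.
  rewrite pDt_Lop, pDx_Lop, (pDx_Lop (Lop alpha v (Lop alpha v w))), pDx_Pop,
    smooth2_schwarz, vt by auto.
  change (vk alpha v 1 t x) with (alpha (v t x) * pDx v t x).
  change (Lop alpha v w t x) with (alpha (v t x) * pDx w t x).
  change (Lop alpha v (Lop alpha v (Lop alpha v w)) t x)
    with (alpha (v t x) * pDx (Lop alpha v (Lop alpha v w)) t x).
  unfold phi. field. exact Hn.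
Qed.

Lemma eval_G_terms k t x : (1 <= k)%nat -> U t x ->
  eval_terms (G_terms alpha k) v t x =
  binom2 k * derivR (phi alpha) (v t x) * vk alpha v 1 t x ^ 2
  + (binom2 k - ge2 k) * phi alpha (v t x) * vk alpha v 2 t x.
Proof.
  intros Hk Ut. destruct k as [|[|k]]; [lia| |].
  - unfold binom2, ge2. cbn [G_terms eval_terms fold_right]. rewrite INR_1. field.
  - cbn [G_terms].
    rewrite eval_terms_app, !eval_terms_scale, eval_terms_mul, !eval_vk_terms by exact Ut.
    simpl; ring.
Qed.

Lemma eval_Ha_terms k t x : U t x ->
  eval_terms (Ha_terms alpha a k) v t x =
  - (derivR a (v t x) / alpha (v t x)) * vk alpha v 1 t x * vk alpha v (S k) t x.
Proof.
  intros Ut. unfold Ha_terms. rewrite eval_terms_scale, eval_terms_mul, !eval_vk_terms by exact Ut.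
  ring.
Qed.

Lemma eval_Hv3_terms k t x : U t x ->
  eval_terms (Hv3_terms alpha k) v t x =
  - ge2 k * phi alpha (v t x) * vk alpha v 3 t x * vk alpha v (S k) t x.
Proof.
  intros Ut. destruct k as [|[|k]]; [simpl; ring| simpl; ring|].
  cbn [Hv3_terms]. rewrite eval_terms_scale, eval_terms_mul, !eval_vk_terms by exact Ut.
  simpl; ring.
Qed.

Definition expansion (k : nat) (G H : list term) (s y : R) : R :=
  (INR k - 1) * phi alpha (v s y) * vk alpha v 1 s y * vk alpha v (S (S k)) s y
  + eval_terms G v s y * vk alpha v (S k) s y + eval_terms H v s y.

Lemma dx_expansion k G H t x : smooth_coefs I G -> smooth_coefs I H -> U t x ->
  derivable_pt_lim (fun y => expansion k G H t y) x
    ((INR k - 1) *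
       (derivR (phi alpha) (v t x) * pDx v t x * vk alpha v 1 t x * vk alpha v (S (S k)) t x
        + phi alpha (v t x) * pDx (vk alpha v 1) t x * vk alpha v (S (S k)) t x
        + phi alpha (v t x) * vk alpha v 1 t x * pDx (vk alpha v (S (S k))) t x)
     + (eval_terms (Dx_terms G) v t x * vk alpha v (S k) t x
        + eval_terms G v t x * pDx (vk alpha v (S k)) t x)
     + eval_terms (Dx_terms H) v t x).
Proof.
  intros HG HH Ut.
  assert (Dvk : forall n, derivable_pt_lim (fun y => vk alpha v n t y) x (pDx (vk alpha v n) t x))
    by (intros n; apply smooth2_dx; [apply smooth2_vk| exact Ut]; auto).
  assert (Dphi : derivable_pt_lim (fun y => phi alpha (v t y)) x
                   (derivR (phi alpha) (v t x) * pDx v t x)).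
  { apply dx_comp; [apply Cinf_phi; auto; exact alpha_neq0| exact Ut]. }
  unfold expansion. apply dpl_plus; [apply dpl_plus|].
  - apply dpl_eq with (1 := dpl_mult _ _ _ _ _
      (dpl_mult _ _ _ _ _ (dpl_mult _ _ _ _ _ (dpl_const (INR k - 1) x) Dphi) (Dvk 1%nat))
      (Dvk (S (S k)))).
    ring.
  - exact (dpl_mult _ _ _ _ _ (dx_eval_terms G t x HG Ut) (Dvk (S k))).
  - exact (dx_eval_terms H t x HH Ut).
Qed.

Lemma Pop_v1 t x : U t x ->
  Pop alpha a v (vk alpha v 1) t x = expansion 1 (G_terms alpha 1) (H_terms alpha a 1) t x.
Proof.
  intros Ut.
  assert (dxPv : pDx (Pop alpha a v v) t x = 0)
    by (apply pDx_on with (fun _ _ => 0); [exact Ut| exact v_solution| apply dpl_const]).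
  change (vk alpha v 1) with (Lop alpha v v).
  rewrite Pop_Lop, dxPv by auto.
  unfold expansion. cbn [H_terms G_terms].
  change (eval_terms nil v t x) with 0.
  rewrite eval_Ha_terms, INR_1 by exact Ut.
  change (Lop alpha v v t x) with (vk alpha v 1 t x).
  change (Lop alpha v (Lop alpha v (Lop alpha v v)) t x) with (vk alpha v 3 t x).
  ring.
Qed.

Lemma Pop_vk_succ k t x : (1 <= k)%nat ->
  (forall s y, U s y ->
     Pop alpha a v (vk alpha v k) s y = expansion k (G_terms alpha k) (H_terms alpha a k) s y) ->
  U t x ->
  Pop alpha a v (vk alpha v (S k)) t x =
  expansion (S k) (G_terms alpha (S k)) (H_terms alpha a (S k)) t x.
Proof.
  intros Hk IH Ut.
  assert (Hn := alpha_v_neq0 t x Ut).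
  assert (HG : smooth_coefs I (G_terms alpha k))
    by (apply smooth_coefs_G_terms; auto; exact alpha_neq0).
  assert (HH : smooth_coefs I (H_terms alpha a k))
    by (apply smooth_coefs_H_terms; auto; exact alpha_neq0).
  change (vk alpha v (S k)) with (Lop alpha v (vk alpha v k)).
  rewrite Pop_Lop by (exact Ut || apply smooth2_vk, alpha_smooth).
  rewrite (pDx_on _ _ t x _ Ut IH (dx_expansion k _ _ t x HG HH Ut)).
  destruct k as [|k]; [lia|].
  unfold expansion. cbn [H_terms]. unfold L_terms.
  rewrite !eval_terms_app, eval_terms_mul, !eval_terms_scale, !eval_vk_terms, eval_Ha_terms,
    eval_Hv3_terms, !eval_G_terms by (auto; lia).
  change (pDx v t x) with (pDx (vk alpha v 0) t x).
  rewrite !pDx_vk by exact Ut.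
  change (Lop alpha v (vk alpha v (S k)) t x) with (vk alpha v (S (S k)) t x).
  change (Lop alpha v (Lop alpha v (Lop alpha v (vk alpha v (S k)))) t x)
    with (vk alpha v (S (S (S (S k)))) t x).
  destruct k as [|k].
  - unfold binom2, ge2. rewrite !S_INR, INR_0. field. exact Hn.
  - unfold binom2, ge2. rewrite !S_INR. field. exact Hn.
Qed.

Lemma Pop_vk_expansion k t x : (1 <= k)%nat -> U t x ->
  Pop alpha a v (vk alpha v k) t x = expansion k (G_terms alpha k) (H_terms alpha a k) t x.
Proof.
  intros Hk. revert t x. induction k as [|k IH]; [lia|].
  destruct k as [|k]; [exact Pop_v1|].
  intros t x Ut. apply Pop_vk_succ; [lia| |exact Ut].
  intros s y Usy. apply IH; [lia| exact Usy].
Qed.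

Lemma Pop_vk_normal_form k t x : (1 <= k)%nat -> U t x ->
  Pop alpha a v (vk alpha v k) t x =
  (INR k - 1) * derivR alpha (v t x) * vk alpha v 1 t x * pDx (pDx (vk alpha v k)) t x
  + (A_coef alpha k (v t x) * vk alpha v 1 t x ^ 2 + B_coef alpha k (v t x) * vk alpha v 2 t x)
    * pDx (vk alpha v k) t x
  + eval_terms (H_terms alpha a k) v t x.
Proof.
  intros Hk Ut.
  assert (Hn := alpha_v_neq0 t x Ut).
  rewrite Pop_vk_expansion by assumption. unfold expansion.
  rewrite eval_G_terms by assumption.
  change (vk alpha v (S (S k)) t x) with (alpha (v t x) * pDx (Lop alpha v (vk alpha v k)) t x).
  rewrite pDx_Lop by (exact Ut || apply smooth2_vk, alpha_smooth).
  change (vk alpha v (S k) t x) with (alpha (v t x) * pDx (vk alpha v k) t x).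
  change (vk alpha v 1 t x) with (alpha (v t x) * pDx v t x).
  unfold A_coef, B_coef, phi. field. exact Hn.
Qed.
End TwoVariables.

Theorem mainTheorem3 :
  forall (I : R -> Prop) (alpha a : R -> R),
    is_open_interval I ->
    smooth_on I alpha -> (forall y, I y -> 0 < alpha y) ->
    smooth_on I a ->
    forall k : nat, (1 <= k)%nat ->
    exists (A B : R -> R) (terms : list ((R -> R) * list nat)),
      (forall y, I y -> continuity_pt A y) /\
      (forall y, I y -> continuity_pt B y) /\
      (forall bg, In bg terms ->
         (forall y, I y -> continuity_pt (fst bg) y) /\
         (forall g, In g (snd bg) -> (1 <= g <= k)%nat) /\
         (weight (snd bg) = (k + 1)%nat \/ weight (snd bg) = (k + 3)%nat)) /\
      forall (U : R -> R -> Prop) (v : R -> R -> R),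
        open2 U ->
        smooth2_on U v ->
        (forall t x, U t x -> I (v t x)) ->
        (forall t x, U t x -> Pop alpha a v v t x = 0) ->
        forall t x, U t x ->
          let f := (INR k - 1) * derivR alpha (v t x) * vk alpha v 1 t x in
          let g := A (v t x) * (vk alpha v 1 t x) ^ 2
                   + B (v t x) * vk alpha v 2 t x in
          let h := eval_terms terms v t x in
          Pop alpha a v (vk alpha v k) t x
          = f * pDx (pDx (vk alpha v k)) t x
            + g * pDx (vk alpha v k) t x + h.
Proof.
  intros I alpha a [_ I_open] alpha_smooth alpha_pos a_smooth k Hk.
  apply Cinf_of_smooth_on in alpha_smooth, a_smooth.
  assert (alpha_neq0 : forall y, I y -> alpha y <> 0)
    by (intros y Iy; specialize (alpha_pos y Iy); lra).
  exists (A_coef alpha k), (B_coef alpha k), (H_terms alpha a k).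
  split; [|split; [|split]].
  - intros y Iy. apply (Cinf_continuity_pt I); [apply Cinf_A_coef; auto| exact Iy].
  - intros y Iy. apply (Cinf_continuity_pt I); [apply Cinf_B_coef; auto| exact Iy].
  - intros bg Hbg. destruct (admissible_H_terms alpha a k Hk bg Hbg) as [Hw Hg].
    split; [|split; [exact Hg| exact Hw]]. intros y Iy.
    apply (Cinf_continuity_pt I); [|exact Iy].
    exact (smooth_coefs_H_terms alpha a I I_open alpha_smooth a_smooth alpha_neq0 k bg Hbg).
  - intros U v U_open v_smooth v_in_I v_solution t x Ut. cbv zeta.
    apply (Pop_vk_normal_form I U v); auto.
Qed.
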